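(* Let $q > 5$ be a Sophie Germain prime with $z(2q+1) \mid \pi(q)$. Then $q \equiv 8 \pmod{15}$.
   Context: A Sophie Germain prime is a prime $q$ with $2q+1$ prime. $F_n$ denotes the $n$-th Fibonacci number ($F_0=0$, $F_1=1$). For a prime $p$, $z(p)$ is the least positive integer $k$ with $p \mid F_k$. $\pi(n)$ is the Pisano period, the least period of $(F_m \bmod n)_{m\ge0}$. *)

From mathcomp Require Import all_boot.
Set Implicit Arguments. Unset Strict Implicit. Unset Printing Implicit Defensive.

Fixpoint fib (n : nat) : nat :=
  match n with
  | 0 => 0
  | 1 => 1
  | (m.+1 as k).+1 => fib k + fib m
  end.

Definition sophie_germain (q : nat) : Prop := prime q /\ prime (2 * q + 1).

Definition is_rank_app (p k : nat) : Prop :=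
  0 < k /\ p %| fib k /\ (forall j, 0 < j -> j < k -> ~~ (p %| fib j)).

Definition fib_period (n k : nat) : Prop :=
  forall m, fib (m + k) %% n = fib m %% n.

Definition is_pisano (n k : nat) : Prop :=
  0 < k /\ fib_period n k /\ (forall j, 0 < j -> j < k -> ~ fib_period n j).

(* Let r be a prime other than 2 and 5, and z a primitive fifth root of unity
   in a field of characteristic r.  The Gauss sum g = z - z^2 - z^3 + z^4
   satisfies g^2 = 5 and, by Frobenius, g^r = g or -g according as r is
   +-1 or +-2 mod 5.  Binet's formula 2^n F_n g = (1 + g)^n - (1 - g)^n then
   shows that r - 1 is a period of F mod r in the first case, and that
   r | F_(r+1) in the second.
   For the Sophie Germain pair q, p = 2q + 1 with q = +-1 mod 5, pi(q) divides
   q - 1, hence so does z(p); but z(p) also divides p + 1 (q = 1 mod 5) or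
   p - 1 (q = 4 mod 5), so z(p) | 4, which is impossible as F_k < p for k <= 4.
   Thus q = 3 mod 5, and q = 2 mod 3 since 3 divides neither q nor 2q + 1. *)

From mathcomp Require Import all_boot all_algebra all_fingroup all_solvable all_field.
From mathcomp Require Import ring zify.
Set Implicit Arguments.
Unset Strict Implicit.
Unset Printing Implicit Defensive.

Import GRing.Theory.
Local Open Scope ring_scope.

Lemma eqn_mod_pchar (R : nzRingType) (r m n : nat) : r \in [pchar R] ->
  (m%:R == n%:R :> R) = (m == n %[mod r])%N.
Proof.
move=> charRr; wlog le_nm : m n / (n <= m)%N.
  by move=> IH; case: (leqP n m) => [|/ltnW] /IH //; rewrite eq_sym => ->; rewrite eq_sym.
by rewrite eqn_mod_dvd // (dvdn_pcharf charRr) natrB // subr_eq0.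
Qed.

Lemma fib_binet (R : comPzRingType) (x : R) (n : nat) : x ^+ 2 = 5 ->
  2 ^+ n * (fib n)%:R * x = (1 + x) ^+ n - (1 - x) ^+ n.
Proof.
move=> x_sqr; pose u k := (1 + x) ^+ k - (1 - x) ^+ k.
have sqr_1px : (1 + x) ^+ 2 = 2 * (1 + x) + 4.
  by transitivity (1 + 2 * x + x ^+ 2); [ring | rewrite x_sqr; ring].
have sqr_1mx : (1 - x) ^+ 2 = 2 * (1 - x) + 4.
  by transitivity (1 - 2 * x + x ^+ 2); [ring | rewrite x_sqr; ring].
have u_rec k : u k.+2 = 2 * u k.+1 + 4 * u k.
  by rewrite /u -addn2 !exprD sqr_1px sqr_1mx !exprS; ring.
suff /(_ n)[] : forall k, 2 ^+ k * (fib k)%:R * x = u k /\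
                    2 ^+ k.+1 * (fib k.+1)%:R * x = u k.+1 by [].
elim=> [|k [IHk IHk1]]; first by rewrite /u /=; split; ring.
split=> //; rewrite u_rec -IHk -IHk1 /= natrD !exprS; ring.
Qed.

Lemma fibSS n : (fib n.+2 = fib n.+1 + fib n)%N.
Proof. by []. Qed.

Definition gauss5 {R : pzRingType} (z : R) : R := z - z ^+ 2 - z ^+ 3 + z ^+ 4.

Lemma gauss5_pchar (R : comNzRingType) (r : nat) (z : R) : r \in [pchar R] ->
  gauss5 z ^+ r = gauss5 (z ^+ r).
Proof.
move=> charRr; rewrite -(pFrobenius_autE charRr) /gauss5 !rmorphD !rmorphN /=.
by rewrite !pFrobenius_autE !(exprAC z r).
Qed.

Section Gauss5.
Variables (F : fieldType) (z : F).
Hypotheses (z5 : z ^+ 5 = 1) (z_neq1 : z != 1).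

Lemma expr_mod5 k : z ^+ k = z ^+ (k %% 5).
Proof. by rewrite {1}(divn_eq k 5) exprD mulnC exprM z5 expr1n mul1r. Qed.

Lemma gauss5_sqr : gauss5 z ^+ 2 = 5.
Proof.
have sum_z : 1 + z + z ^+ 2 + z ^+ 3 + z ^+ 4 = 0.
  have : (z - 1) * (1 + z + z ^+ 2 + z ^+ 3 + z ^+ 4) = 0.
    by transitivity (z ^+ 5 - 1); [ring | rewrite z5 subrr].
  by move/eqP; rewrite mulf_eq0 subr_eq0 (negPf z_neq1) => /eqP.
transitivity (5 - (1 + z + z ^+ 2 + z ^+ 3 + z ^+ 4)
              + (z ^+ 5 - 1) * (4 - z - 2 * z ^+ 2 + z ^+ 3)).
  by rewrite /gauss5; ring.
by rewrite sum_z z5 subrr mul0r subr0 addr0.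
Qed.

Lemma gauss5_expr_pm1 k : (k %% 5 \in [:: 1; 4])%N -> gauss5 (z ^+ k) = gauss5 z.
Proof.
rewrite expr_mod5 !inE => /orP[] /eqP ->;
  by rewrite /gauss5 -!exprM !(expr_mod5 (_ * _)) /=; ring.
Qed.

Lemma gauss5_expr_pm2 k : (k %% 5 \in [:: 2; 3])%N -> gauss5 (z ^+ k) = - gauss5 z.
Proof.
rewrite expr_mod5 !inE => /orP[] /eqP ->;
  by rewrite /gauss5 -!exprM !(expr_mod5 (_ * _)) /=; ring.
Qed.

End Gauss5.

Lemma exists_root5_pchar r : prime r -> r != 5%N ->
  exists (F : finFieldType) (z : F), [/\ r \in [pchar F], z ^+ 5 = 1 & z != 1].
Proof.
move=> r_prime r_neq5; have [F charFr cardF] := @pPrimePowerField r 4 r_prime isT.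
have coprime_r5 : coprime r 5 by rewrite prime_coprime // dvdn_prime2.
have /(Cauchy (isT : prime 5))[u _ ord_u] : (5 %| #|[set: {unit F}]|)%N.
  rewrite card_finField_unit cardF -subn1 -eqn_mod_dvd ?expn_gt0 ?prime_gt0 //.
  by apply/eqP; exact: Euler_exp_totient coprime_r5.
exists F, (val u); split=> //.
  by rewrite -FinRing.val_unitX -ord_u expg_order.
apply/eqP => u1; suff u_1 : u = 1%g by rewrite u_1 order1 in ord_u.
exact: val_inj.
Qed.

Section FibPchar.
Variables (F : fieldType) (r : nat) (x : F).
Hypotheses (charFr : r \in [pchar F]) (x_sqr : x ^+ 2 = 5).
Hypotheses (r_neq2 : r != 2%N) (r_neq5 : r != 5%N).

Let natf_prime_neq0 p : prime p -> r != p -> p%:R != 0 :> F.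
Proof.
by move=> p_prime; rewrite -(dvdn_pcharf charFr) (dvdn_prime2 (pcharf_prime charFr) p_prime).
Qed.

Let two_neq0 : 2 != 0 :> F. Proof. exact: (@natf_prime_neq0 2 isT r_neq2). Qed.

Let x_neq0 : x != 0.
Proof.
by apply: contra_neq (@natf_prime_neq0 5 isT r_neq5) => x0; rewrite -x_sqr x0 expr0n.
Qed.

Let expr_pchar_1D (y : F) : (1 + y) ^+ r = 1 + y ^+ r.
Proof. by rewrite -!(pFrobenius_autE charFr) rmorphD rmorph1. Qed.

Let expr_pchar_1B (y : F) : (1 - y) ^+ r = 1 - y ^+ r.
Proof. by rewrite -!(pFrobenius_autE charFr) rmorphB rmorph1. Qed.

Let two_expr_pchar : 2 ^+ r = 2 :> F.
Proof. by rewrite -(pFrobenius_autE charFr) rmorph_nat. Qed.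

Lemma fib_addn_pchar_fixed : x ^+ r = x -> forall n, (fib (n + r))%:R = (fib n.+1)%:R :> F.
Proof.
move=> xr n; apply: (mulIf x_neq0); apply: (mulfI (expf_neq0 n.+1 two_neq0)).
have two_exprD : 2 ^+ (n + r) = 2 ^+ n.+1 :> F by rewrite exprD two_expr_pchar exprSr.
rewrite !mulrA -{1}two_exprD !fib_binet // !exprD expr_pchar_1D expr_pchar_1B xr.
by rewrite -!exprSr.
Qed.

Lemma fib_pchar_neg : x ^+ r = - x -> (fib r.+1)%:R = 0 :> F.
Proof.
move=> xr; apply: (mulIf x_neq0); apply: (mulfI (expf_neq0 r.+1 two_neq0)).
rewrite !mulrA fib_binet // mulr0 mul0r !exprS expr_pchar_1D expr_pchar_1B xr.
by rewrite opprK; ring.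
Qed.

End FibPchar.

Lemma fib_period_prime_pm1 r : prime r -> (r %% 5 \in [:: 1; 4])%N -> fib_period r r.-1.
Proof.
move=> r_prime r_pm1; have r_gt1 := prime_gt1 r_prime.
have [r_neq2 r_neq5] : r != 2%N /\ r != 5%N.
  by split; apply: contraTneq r_pm1 => ->.
have [F [z [charFr z5 z_neq1]]] := exists_root5_pchar r_prime r_neq5.
have xr : gauss5 z ^+ r = gauss5 z by rewrite gauss5_pchar // gauss5_expr_pm1.
have fib_shift := fib_addn_pchar_fixed charFr (gauss5_sqr z5 z_neq1) r_neq2 r_neq5 xr.
case=> [|m]; apply/eqP; rewrite -(eqn_mod_pchar _ _ charFr); last first.
  by rewrite addSnnS prednK ?prime_gt0 // fib_shift.
have fib_r : (fib r)%:R = 1 :> F by rewrite -[r]add0n fib_shift.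
have fib_rS : (fib r.+1)%:R = 1 :> F by rewrite -add1n fib_shift.
move: fib_rS; rewrite -(ltn_predK r_gt1) fibSS (ltn_predK r_gt1) natrD fib_r.
by move/(canRL (addKr _)) => ->; rewrite addNr.
Qed.

Lemma prime_dvd_fibS_pm2 r : prime r -> (r %% 5 \in [:: 2; 3])%N -> (r %| fib r.+1)%N.
Proof.
move=> r_prime r_pm2; have [->|r_neq2] := eqVneq r 2%N; first by [].
have r_neq5 : r != 5%N by apply: contraTneq r_pm2 => ->.
have [F [z [charFr z5 z_neq1]]] := exists_root5_pchar r_prime r_neq5.
have xr : gauss5 z ^+ r = - gauss5 z by rewrite gauss5_pchar // gauss5_expr_pm2.
by rewrite (dvdn_pcharf charFr) (fib_pchar_neg charFr (gauss5_sqr z5 z_neq1) r_neq2 r_neq5 xr).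
Qed.

Local Open Scope nat_scope.

Lemma fib_add m n : fib (m + n.+1) = fib m.+1 * fib n.+1 + fib m * fib n.
Proof.
suff /(_ n)[] : forall k, fib (m + k.+1) = fib m.+1 * fib k.+1 + fib m * fib k /\
                         fib (m + k.+2) = fib m.+1 * fib k.+2 + fib m * fib k.+1 by [].
elim=> [|k [IH1 IH2]]; first by rewrite addn1 addn2 /= !muln1 muln0 !addn0.
split=> //; rewrite !addnS fibSS -!addnS IH1 IH2 (fibSS k.+1) (fibSS k); ring.
Qed.

Lemma rank_app_dvd p z n : prime p -> is_rank_app p z -> p %| fib n -> z %| n.
Proof.
move=> p_prime [z_gt0 [p_dvd_fz z_min]].
have p_ndvd_fz1 : ~~ (p %| fib z.-1).
  apply: z_min; last by rewrite prednK.
  rewrite lt0n; apply: contraTneq p_dvd_fz => z1.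
  by rewrite -(prednK z_gt0) z1 dvdn1 gtn_eqF ?prime_gt1.
elim/ltn_ind: n => n IHn p_dvd_fn; have [n_lt_z | z_le_n] := ltnP n z.
  case: n {IHn} n_lt_z p_dvd_fn => [|n] n_lt_z p_dvd_fn; first exact: dvdn0.
  by have := z_min n.+1 isT n_lt_z; rewrite p_dvd_fn.
have fib_split a : fib (a + z) = fib a.+1 * fib z + fib a * fib z.-1.
  by rewrite -{1}(prednK z_gt0) fib_add prednK.
move: p_dvd_fn; rewrite -(subnK z_le_n) (dvdn_addl _ (dvdnn z)) fib_split.
rewrite dvdn_addr ?(dvdn_mull _ p_dvd_fz) // Euclid_dvdM // (negPf p_ndvd_fz1) orbF.
by apply: IHn; rewrite ltn_subrL z_gt0 (leq_trans z_gt0 z_le_n).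
Qed.

Lemma fib_period_mull n k c : fib_period n k -> fib_period n (c * k).
Proof.
move=> per_k; elim: c => [|c IHc] m; first by rewrite addn0.
by rewrite mulSn addnA addnAC per_k IHc.
Qed.

Lemma pisano_dvd n P k : is_pisano n P -> fib_period n k -> P %| k.
Proof.
move=> [P_gt0 [per_P P_min]] per_k.
have per_mod : fib_period n (k %% P).
  move=> m; rewrite -(fib_period_mull (k %/ P) per_P) -addnA [k %% P + _]addnC.
  by rewrite -divn_eq per_k.
apply/negPn/negP; rewrite /dvdn -lt0n => mod_gt0.
exact: P_min mod_gt0 (ltn_pmod k P_gt0) per_mod.
Qed.

Lemma rank_app_gt4 p z : 3 < p -> is_rank_app p z -> 4 < z.
Proof.
move=> p_gt3 [z_gt0 [p_dvd_fz _]]; rewrite ltnNge; apply/negP => z_le4.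
have [fz_gt0 fz_le3] : 0 < fib z /\ fib z <= 3.
  by case: z z_gt0 z_le4 {p_dvd_fz} => [|[|[|[|[|]]]]].
by have := dvdn_leq fz_gt0 p_dvd_fz; lia.
Qed.

Lemma sophie_germain_mod3 q : sophie_germain q -> 3 < q -> q %% 3 = 2.
Proof.
move=> [q_prime p_prime] q_gt3.
have : ~~ (3 %| q) by rewrite dvdn_prime2 // ltn_eqF.
have : ~~ (3 %| 2 * q + 1) by rewrite dvdn_prime2 // ltn_eqF //; lia.
lia.
Qed.

Lemma sophie_germain_mod5 q : sophie_germain q -> 5 < q -> q %% 5 \in [:: 1; 3; 4].
Proof.
move=> [q_prime p_prime] q_gt5.
have : ~~ (5 %| q) by rewrite dvdn_prime2 // ltn_eqF.
have : ~~ (5 %| 2 * q + 1) by rewrite dvdn_prime2 // ltn_eqF //; lia.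
rewrite !inE; lia.
Qed.

Lemma sophie_germain_rank_app_dvd4 q z :
    sophie_germain q -> q %% 5 \in [:: 1; 4] ->
  is_rank_app (2 * q + 1) z -> z %| q.-1 -> z %| 4.
Proof.
move=> [q_prime p_prime] q_pm1 rank_z z_dvd_q1.
have z_dvd_2q1 := dvdn_mull 2 z_dvd_q1; have q_gt0 := prime_gt0 q_prime.
move: q_pm1; rewrite !inE => /orP[] /eqP q_mod5.
- have p_pm2 : (2 * q + 1) %% 5 \in [:: 2; 3] by rewrite !inE; lia.
  have z_dvd_pS := rank_app_dvd p_prime rank_z (prime_dvd_fibS_pm2 p_prime p_pm2).
  have := dvdn_sub z_dvd_pS z_dvd_2q1.
  by have -> : (2 * q + 1).+1 - 2 * q.-1 = 4 by lia.
- have p_pm1 : (2 * q + 1) %% 5 \in [:: 1; 4] by rewrite !inE; lia.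
  have p_dvd_fpP : 2 * q + 1 %| fib (2 * q + 1).-1.
    by have := fib_period_prime_pm1 p_prime p_pm1 0; rewrite add0n /dvdn => ->; rewrite mod0n.
  have := dvdn_sub (rank_app_dvd p_prime rank_z p_dvd_fpP) z_dvd_2q1.
  have -> : (2 * q + 1).-1 - 2 * q.-1 = 2 by lia.
  by move/dvdn_trans; apply.
Qed.

Theorem theorem7p1 (q zq piq : nat) :
  sophie_germain q -> 5 < q ->
  is_rank_app (2 * q + 1) zq -> is_pisano q piq ->
  zq %| piq ->
  q = 8 %[mod 15].
Proof.
move=> sg_q q_gt5 rank_zq pisano_piq zq_dvd_piq.
have q_mod3 : q %% 3 = 2 by apply: sophie_germain_mod3 sg_q _; lia.
have [q_pm1 | q_npm1] := boolP (q %% 5 \in [:: 1; 4]); last first.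
  by move: q_npm1 (sophie_germain_mod5 sg_q q_gt5); rewrite !inE; lia.
have [q_prime _] := sg_q.
have per_q := fib_period_prime_pm1 q_prime q_pm1.
have zq_dvd_q1 := dvdn_trans zq_dvd_piq (pisano_dvd pisano_piq per_q).
have zq_dvd_4 := sophie_germain_rank_app_dvd4 sg_q q_pm1 rank_zq zq_dvd_q1.
have zq_gt4 : 4 < zq by apply: rank_app_gt4 rank_zq; lia.
by have := dvdn_leq (isT : 0 < 4) zq_dvd_4; lia.
Qed.
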